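(* Let $T$ be a causal theory with explainable symbols $\mathbf{p}$ all of whose rules are D-rules, let $\Pi$ be the conjunction of $\mathrm{tr}_d[R]$ over all rules $R$ of $T$, and let $CC$ be the conjunction of the completeness constraints for $\mathbf{p}$. Then $T\land CC\models\mathrm{SM}_{\mathbf{p}\widehat{\mathbf{p}}}[\Pi\land CC]$.
   Context: A causal theory $T$ consists of a list $\mathbf{p}$ of distinct predicate constants (explainable symbols, not equality) and a finite set of causal rules $F\Leftarrow G$. With predicate variables $u_p$ ($p\in\mathbf{p}$), list $\mathbf{u}$, $T^\dagger(\mathbf{u})$ is the conjunction of $\forall\mathbf{x}(G\to F^{\mathbf{p}}_{\mathbf{u}})$ over the rules ($\mathbf{x}$ the free variables, $F^{\mathbf{p}}_{\mathbf{u}}$ replaces each $p$ by $u_p$), and $T$ is identified with the sentence $\forall\mathbf{u}(T^\dagger(\mathbf{u})\leftrightarrow(\mathbf{u}=\mathbf{p}))$, where $\mathbf{u}=\mathbf{p}$ is $\bigwedge_p\forall\mathbf{x}(u_p(\mathbf{x})\leftrightarrow p(\mathbf{x}))$. A D-rule has the form $\bigvee_{A\in Pos}A\lor\bigvee_{A\in Neg}\neg A\Leftarrow G$ with $Pos,Neg$ finite sets of atoms with predicates in $\mathbf{p}$ and $G$ without $\to$. For $p\in\mathbf{p}$, $\widehat p$ is a new predicate constant of the same arity; for $A=p(\mathbf{t})$, $\widehat A=\widehat p(\mathbf{t})$. $\mathrm{tr}_d$ of the D-rule is $\widetilde\forall\big(\neg\neg G\land\bigwedge_{A\in Pos}(\widehat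 A\lor\neg\widehat A)\land\bigwedge_{A\in Neg}(A\lor\neg A)\to\bigvee_{A\in Pos}A\lor\bigvee_{A\in Neg}\widehat A\big)$ ($\widetilde\forall$ = universal closure). $CC$ is the conjunction over $p\in\mathbf{p}$ of $\forall\mathbf{x}\neg(p(\mathbf{x})\land\widehat p(\mathbf{x}))$ and $\forall\mathbf{x}\neg(\neg p(\mathbf{x})\land\neg\widehat p(\mathbf{x}))$. For a logic program $F$ (conjunction of sentences $\widetilde\forall(F_1\to F_2)$ with no other $\to$), $\mathrm{SM}_{\mathbf{p}\widehat{\mathbf{p}}}[F]$ is $F\land\neg\exists\mathbf{u}\widehat{\mathbf{u}}\big(((\mathbf{u},\widehat{\mathbf{u}})<(\mathbf{p},\widehat{\mathbf{p}}))\land F^\diamond(\mathbf{u},\widehat{\mathbf{u}})\big)$, where $\widehat{\mathbf{u}}=(\widehat u_p)$ are further predicate variables, $F^\diamond$ replaces each occurrence of $p$ / $\widehat p$ not in the scope of $\neg$ by $u_p$ / $\widehat u_p$, $p\le q$ is $\forall\mathbf{x}(p(\mathbf{x})\to q(\mathbf{x}))$ (componentwise for tuples) and $\mathbf{a}<\mathbf{b}$ is $(\mathbf{a}\le\mathbf{b})\land\neg(\mathbf{b}\le\mathbf{a})$. $\models$ is classical (second-order) entailment. *)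

From Stdlib Require Import List Arith.
Import ListNotations.
Set Implicit Arguments.

Inductive term : Type :=
| Var (v : nat)
| Fn (f : nat) (args : list term).

(* predicate constants: ordinary constants [PC p] and, for an explainable
   symbol p, the new constant [PHat p] (written \widehat p in the paper) *)
Inductive psym : Type :=
| PC (p : nat)
| PHat (p : nat).

Inductive formula : Type :=
| FBot
| FTop
| FAtom (s : psym) (ts : list term)
| FEq (t1 t2 : term)
| FNeg (F : formula)
| FAnd (F G : formula)
| FOr (F G : formula)
| FImp (F G : formula)
| FAll (v : nat) (F : formula)
| FEx (v : nat) (F : formula).

Definition bigOr (l : list formula) : formula := fold_right FOr FBot l.
Definition bigAnd (l : list formula) : formula := fold_right FAnd FTop l.

Section Sem.
Variable D : Type.
Variable fI : nat -> list D -> D.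

Fixpoint teval (s : nat -> D) (t : term) : D :=
  match t with
  | Var v => s v
  | Fn f ts => fI f (map (teval s) ts)
  end.

Definition upd (s : nat -> D) (v : nat) (d : D) : nat -> D :=
  fun w => if Nat.eqb w v then d else s w.

(* [evalD Ineg Ipos F s]: truth value of F under assignment s where atoms
   NOT in the scope of a negation are interpreted by [Ipos] and atoms in the
   scope of a negation by [Ineg].  With Ineg = Ipos = I this is ordinary
   satisfaction; with Ipos = I[p:=u, phat:=uhat] and Ineg = I it is the
   satisfaction of F^diamond(u,uhat). *)
Fixpoint evalD (Ineg Ipos : psym -> list D -> Prop) (F : formula) (s : nat -> D)
  : Prop :=
  match F with
  | FBot => False
  | FTop => True
  | FAtom p ts => Ipos p (map (teval s) ts)
  | FEq t1 t2 => teval s t1 = teval s t2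
  | FNeg G => ~ evalD Ineg Ineg G s
  | FAnd G H => evalD Ineg Ipos G s /\ evalD Ineg Ipos H s
  | FOr G H => evalD Ineg Ipos G s \/ evalD Ineg Ipos H s
  | FImp G H => evalD Ineg Ipos G s -> evalD Ineg Ipos H s
  | FAll v G => forall d, evalD Ineg Ipos G (upd s v d)
  | FEx v G => exists d, evalD Ineg Ipos G (upd s v d)
  end.

Definition sat (I : psym -> list D -> Prop) (F : formula) (s : nat -> D) : Prop :=
  evalD I I F s.

Definition holds (I : psym -> list D -> Prop) (F : formula) : Prop :=
  forall s, sat I F s.

Definition repl_p (E : list nat) (I : psym -> list D -> Prop)
  (u : nat -> list D -> Prop) : psym -> list D -> Prop :=
  fun q => match q with
           | PC p => if existsb (Nat.eqb p) E then u p else I (PC p)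
           | PHat p => I (PHat p)
           end.

Definition repl_ph (E : list nat) (I : psym -> list D -> Prop)
  (u uh : nat -> list D -> Prop) : psym -> list D -> Prop :=
  fun q => match q with
           | PC p => if existsb (Nat.eqb p) E then u p else I (PC p)
           | PHat p => if existsb (Nat.eqb p) E then uh p else I (PHat p)
           end.

Definition le_on (ar : nat -> nat) (E : list nat) (u v : nat -> list D -> Prop) : Prop :=
  forall p, In p E -> forall l, length l = ar p -> u p l -> v p l.

Definition eq_on (ar : nat -> nat) (E : list nat) (u v : nat -> list D -> Prop) : Prop :=
  forall p, In p E -> forall l, length l = ar p -> (u p l <-> v p l).
End Sem.

Definition atom : Type := (nat * list term)%type.
Definition atomF (a : atom) : formula := FAtom (PC (fst a)) (snd a).
Definition hatF (a : atom) : formula := FAtom (PHat (fst a)) (snd a).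

(* a D-rule  \/_{A in Pos} A \/ \/_{A in Neg} ~A  <=  G *)
Record drule : Type := DRule {
  dpos : list atom;
  dneg : list atom;
  dbody : formula }.

Definition dhead (r : drule) : formula :=
  FOr (bigOr (map atomF (dpos r))) (bigOr (map (fun a => FNeg (atomF a)) (dneg r))).

Record ctheory : Type := CTheory {
  expl : list nat;
  drules : list drule }.

Fixpoint no_imp (F : formula) : Prop :=
  match F with
  | FBot | FTop | FAtom _ _ | FEq _ _ => True
  | FNeg G | FAll _ G | FEx _ G => no_imp G
  | FAnd G H | FOr G H => no_imp G /\ no_imp H
  | FImp _ _ => False
  end.

Fixpoint sig_ok (ar : nat -> nat) (E : list nat) (F : formula) : Prop :=
  match F with
  | FBot | FTop | FEq _ _ => True
  | FAtom (PC p) ts => In p E -> length ts = ar p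
  | FAtom (PHat _) _ => False
  | FNeg G | FAll _ G | FEx _ G => sig_ok ar E G
  | FAnd G H | FOr G H | FImp G H => sig_ok ar E G /\ sig_ok ar E H
  end.

Definition wf_ctheory (ar : nat -> nat) (T : ctheory) : Prop :=
  NoDup (expl T) /\
  forall r, In r (drules T) ->
    (forall a, In a (dpos r ++ dneg r) -> In (fst a) (expl T) /\ length (snd a) = ar (fst a)) /\
    no_imp (dbody r) /\ sig_ok ar (expl T) (dbody r).

(* T^dagger(u): conjunction over the rules of  forall x (G -> F^p_u) *)
Definition Tdag (D : Type) (fI : nat -> list D -> D) (I : psym -> list D -> Prop)
  (T : ctheory) (u : nat -> list D -> Prop) : Prop :=
  forall r, In r (drules T) -> forall s,
    sat fI I (dbody r) s -> sat fI (repl_p (expl T) I u) (dhead r) s.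

(* truth of the sentence T :=  forall u (T^dagger(u) <-> u = p) *)
Definition causal_holds (D : Type) (fI : nat -> list D -> D) (ar : nat -> nat)
  (I : psym -> list D -> Prop) (T : ctheory) : Prop :=
  forall u : nat -> list D -> Prop,
    Tdag fI I T u <-> eq_on ar (expl T) u (fun p => I (PC p)).

(* tr_d of a D-rule (the universal closure is taken by [holds]) *)
Definition tr_d (r : drule) : formula :=
  FImp (FAnd (FNeg (FNeg (dbody r)))
             (FAnd (bigAnd (map (fun a => FOr (hatF a) (FNeg (hatF a))) (dpos r)))
                   (bigAnd (map (fun a => FOr (atomF a) (FNeg (atomF a))) (dneg r)))))
       (FOr (bigOr (map atomF (dpos r))) (bigOr (map hatF (dneg r)))).

Definition Pi (T : ctheory) : list formula := map tr_d (drules T).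

(* completeness constraints for the symbols in E (free variables 0..ar p - 1,
   universally closed by [holds]) *)
Definition cc_formulas (ar : nat -> nat) (E : list nat) : list formula :=
  flat_map (fun p =>
     let xs := map Var (seq 0 (ar p)) in
     [ FNeg (FAnd (FAtom (PC p) xs) (FAtom (PHat p) xs));
       FNeg (FAnd (FNeg (FAtom (PC p) xs)) (FNeg (FAtom (PHat p) xs))) ]) E.

(* truth of SM_{p phat}[F] where F is the conjunction of the sentences
   (universal closures) in Fs *)
Definition SM (D : Type) (fI : nat -> list D -> D) (ar : nat -> nat) (E : list nat)
  (I : psym -> list D -> Prop) (Fs : list formula) : Prop :=
  (forall F, In F Fs -> holds fI I F) /\
  ~ exists u uh : nat -> list D -> Prop,
      (le_on ar E u (fun p => I (PC p)) /\ le_on ar E uh (fun p => I (PHat p)) /\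
       ~ (le_on ar E (fun p => I (PC p)) u /\ le_on ar E (fun p => I (PHat p)) uh)) /\
      (forall F, In F Fs -> forall s, evalD fI I (repl_ph E I u uh) F s).

(* Since T holds, T^†(p) holds, so every rule with a true body has a true head;
   CC turns each true ¬A in a head into Â, hence p, p̂ satisfy Π.  For
   minimality, take a model (u, û) < (p, p̂) of (Π ∧ CC)^⋄ and let
   w := u ∪ (¬p ∩ ¬û).  Using CC and (u, û) ≤ (p, p̂), every rule with a true
   body has a true head under w, so T^†(w) holds and T forces w = p.  This
   gives p ≤ u, and via CC also p̂ ≤ û, contradicting strictness. *)
From Stdlib Require Import List Arith Classical.
Import ListNotations.
Set Implicit Arguments.

Section Semantics.
Variable D : Type.
Variable fI : nat -> list D -> D.

Definition atom_args (s : nat -> D) (a : atom) : list D := map (teval fI s) (snd a).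

Lemma evalD_bigOr_map {A} (f : A -> formula) Ineg Ipos l s :
  evalD fI Ineg Ipos (bigOr (map f l)) s <->
  exists a, In a l /\ evalD fI Ineg Ipos (f a) s.
Proof.
  induction l as [|b l IH]; simpl.
  - split; [tauto | intros [a [[] _]]].
  - rewrite IH; split.
    + intros [H | [a [Ha H]]]; eauto.
    + intros [a [[<- | Ha] H]]; eauto.
Qed.

Lemma evalD_bigAnd_map {A} (f : A -> formula) Ineg Ipos l s :
  evalD fI Ineg Ipos (bigAnd (map f l)) s <->
  forall a, In a l -> evalD fI Ineg Ipos (f a) s.
Proof.
  induction l as [|b l IH]; simpl.
  - tauto.
  - rewrite IH; split.
    + intros [Hb H] a [<- | Ha]; auto.
    + auto.
Qed.

Lemma sat_dhead J r s :
  sat fI J (dhead r) s <->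
  (exists a, In a (dpos r) /\ J (PC (fst a)) (atom_args s a)) \/
  (exists a, In a (dneg r) /\ ~ J (PC (fst a)) (atom_args s a)).
Proof. unfold sat, dhead; simpl; rewrite !evalD_bigOr_map; reflexivity. Qed.

Lemma evalD_tr_d Ineg Ipos r s :
  evalD fI Ineg Ipos (tr_d r) s <->
  (~ ~ sat fI Ineg (dbody r) s ->
   (forall a, In a (dpos r) ->
      Ipos (PHat (fst a)) (atom_args s a) \/ ~ Ineg (PHat (fst a)) (atom_args s a)) ->
   (forall a, In a (dneg r) ->
      Ipos (PC (fst a)) (atom_args s a) \/ ~ Ineg (PC (fst a)) (atom_args s a)) ->
   (exists a, In a (dpos r) /\ Ipos (PC (fst a)) (atom_args s a)) \/
   (exists a, In a (dneg r) /\ Ipos (PHat (fst a)) (atom_args s a))).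
Proof.
  unfold tr_d; simpl.
  rewrite !evalD_bigAnd_map, !evalD_bigOr_map; unfold sat; simpl; tauto.
Qed.

Lemma map_nth_seq0 (d : D) (l : list D) :
  map (fun i => nth i l d) (seq 0 (length l)) = l.
Proof.
  induction l as [|x l IH]; simpl; [reflexivity |].
  f_equal; rewrite <- seq_shift, map_map; exact IH.
Qed.

Lemma holds_cc_formulas_iff (d : D) ar E I :
  (forall F, In F (cc_formulas ar E) -> holds fI I F) ->
  forall q l, In q E -> length l = ar q -> (I (PHat q) l <-> ~ I (PC q) l).
Proof.
  intros Hcc q l Hq Hl.
  set (xs := map Var (seq 0 (ar q))).
  set (s := fun i => nth i l d).
  assert (Hxs : map (teval fI s) xs = l).
  { unfold xs; rewrite map_map, <- Hl; apply map_nth_seq0. }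
  assert (Hin : forall F,
            In F [FNeg (FAnd (FAtom (PC q) xs) (FAtom (PHat q) xs));
                  FNeg (FAnd (FNeg (FAtom (PC q) xs)) (FNeg (FAtom (PHat q) xs)))] ->
            In F (cc_formulas ar E)).
  { intros F HF; apply in_flat_map; eauto. }
  pose proof (Hcc _ (Hin _ (or_introl eq_refl)) s) as Hexcl.
  pose proof (Hcc _ (Hin _ (or_intror (or_introl eq_refl))) s) as Hcover.
  unfold sat in Hexcl, Hcover; simpl in Hexcl, Hcover; rewrite Hxs in Hexcl, Hcover.
  split; [| intro Hn; apply NNPP]; tauto.
Qed.

End Semantics.

Lemma existsb_eqb_In (p : nat) E : In p E -> existsb (Nat.eqb p) E = true.
Proof. intro Hp; apply existsb_exists; exists p; auto using Nat.eqb_refl. Qed.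

Lemma repl_p_PC_in E D (I : psym -> list D -> Prop) u p :
  In p E -> repl_p E I u (PC p) = u p.
Proof. intro Hp; simpl; rewrite existsb_eqb_In by exact Hp; reflexivity. Qed.

Lemma repl_ph_in E D (I : psym -> list D -> Prop) u uh p :
  In p E -> repl_ph E I u uh (PC p) = u p /\ repl_ph E I u uh (PHat p) = uh p.
Proof. intro Hp; simpl; rewrite existsb_eqb_In by exact Hp; auto. Qed.

(* [P], [H] are the values of an atom and of its hat under p, p̂, and [U], [UH]
   their values under u, û; the conclusion is the head of the rule under
   w := U ∪ (¬P ∩ ¬UH). *)
Lemma completed_head_of_diamond {A} (pos neg : list A) (P H U UH : A -> Prop) :
  (forall a, In a (pos ++ neg) -> (H a <-> ~ P a)) ->
  (forall a, In a (pos ++ neg) -> U a -> P a) ->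
  (forall a, In a (pos ++ neg) -> UH a -> H a) ->
  ((forall a, In a pos -> UH a \/ ~ H a) ->
   (forall a, In a neg -> U a \/ ~ P a) ->
   (exists a, In a pos /\ U a) \/ (exists a, In a neg /\ UH a)) ->
  (exists a, In a pos /\ (U a \/ ~ P a /\ ~ UH a)) \/
  (exists a, In a neg /\ ~ (U a \/ ~ P a /\ ~ UH a)).
Proof.
  intros Hcc Hu Huh Hdiamond.
  destruct (classic (exists a, In a pos /\ ~ P a /\ ~ UH a)) as [[a [Ha Hw]] | Hpos];
    [left; eauto |].
  destruct (classic (exists a, In a neg /\ P a /\ ~ U a)) as [[a [Ha [HP HU]]] | Hneg];
    [right; exists a; split; tauto |].
  destruct Hdiamond as [[a [Ha HU]] | [a [Ha HUH]]].
  - intros a Ha.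
    destruct (classic (UH a)); [auto | right].
    rewrite (Hcc a) by (apply in_or_app; auto).
    intros HnP; apply Hpos; eauto.
  - intros a Ha.
    destruct (classic (U a)); [auto | right].
    intros HP; apply Hneg; eauto.
  - left; eauto.
  - right; exists a; split; [exact Ha |].
    assert (Ha' : In a (pos ++ neg)) by (apply in_or_app; auto).
    pose proof (proj1 (Hcc a Ha') (Huh a Ha' HUH)).
    intros [HU | [_ HnUH]]; [apply (Hu a Ha') in HU |]; tauto.
Qed.

Section DRuleTheory.
Variable ar : nat -> nat.
Variable T : ctheory.
Variable D : Type.
Variable fI : nat -> list D -> D.
Variable I : psym -> list D -> Prop.

Let E := expl T.

Hypothesis rule_atoms : forall r a, In r (drules T) -> In a (dpos r ++ dneg r) ->
  In (fst a) E /\ length (snd a) = ar (fst a).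
Hypothesis complete :
  forall q l, In q E -> length l = ar q -> (I (PHat q) l <-> ~ I (PC q) l).
Hypothesis causal : causal_holds fI ar I T.

Lemma holds_Pi : forall F, In F (Pi T) -> holds fI I F.
Proof.
  intros F HF s; apply in_map_iff in HF as [r [<- Hr]].
  apply evalD_tr_d; intros HG _ _.
  assert (Hdag : Tdag fI I T (fun q => I (PC q)))
    by (apply causal; intros q _ l _; reflexivity).
  destruct (proj1 (sat_dhead _ _ _ _) (Hdag r Hr s (NNPP _ HG)))
    as [[a [Ha HA]] | [a [Ha HnA]]].
  - left; exists a; split; [exact Ha |].
    rewrite repl_p_PC_in in HA; [exact HA |].
    apply (rule_atoms r a Hr), in_or_app; auto.
  - right; exists a; split; [exact Ha |].
    assert (Ha' : In a (dpos r ++ dneg r)) by (apply in_or_app; auto).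
    destruct (rule_atoms r a Hr Ha') as [HE Hlen].
    rewrite repl_p_PC_in in HnA by exact HE.
    apply complete; [exact HE | | exact HnA].
    unfold atom_args; rewrite length_map; exact Hlen.
Qed.

Lemma Tdag_completion u uh :
  le_on ar E u (fun q => I (PC q)) -> le_on ar E uh (fun q => I (PHat q)) ->
  (forall F, In F (Pi T) -> forall s, evalD fI I (repl_ph E I u uh) F s) ->
  Tdag fI I T (fun q l => u q l \/ ~ I (PC q) l /\ ~ uh q l).
Proof.
  intros Hu Huh HPi r Hr s HG.
  assert (Hdiamond := proj1 (evalD_tr_d _ _ _ _ _)
                         (HPi _ (in_map _ _ _ Hr) s) (fun HnG => HnG HG)).
  assert (HE : forall a, In a (dpos r ++ dneg r) -> In (fst a) E)
    by (intros a Ha; apply (rule_atoms r a Hr Ha)).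
  assert (Hlen : forall a, In a (dpos r ++ dneg r) ->
            length (atom_args fI s a) = ar (fst a)).
  { intros a Ha; unfold atom_args; rewrite length_map; apply (rule_atoms r a Hr Ha). }
  set (U := fun a => repl_ph E I u uh (PC (fst a)) (atom_args fI s a)).
  set (UH := fun a => repl_ph E I u uh (PHat (fst a)) (atom_args fI s a)).
  assert (Hrepl : forall a, In a (dpos r ++ dneg r) ->
            (U a <-> u (fst a) (atom_args fI s a)) /\
            (UH a <-> uh (fst a) (atom_args fI s a))).
  { intros a Ha; unfold U, UH.
    destruct (repl_ph_in E I u uh (fst a) (HE a Ha)) as [-> ->]; tauto. }
  assert (Hw : forall a, In a (dpos r ++ dneg r) ->
            repl_p E I (fun q l => u q l \/ ~ I (PC q) l /\ ~ uh q l)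
              (PC (fst a)) (atom_args fI s a) <->
            U a \/ ~ I (PC (fst a)) (atom_args fI s a) /\ ~ UH a).
  { intros a Ha; rewrite repl_p_PC_in by exact (HE a Ha).
    destruct (Hrepl a Ha) as [-> ->]; reflexivity. }
  apply sat_dhead.
  destruct (completed_head_of_diamond (dpos r) (dneg r)
              (fun a => I (PC (fst a)) (atom_args fI s a))
              (fun a => I (PHat (fst a)) (atom_args fI s a)) U UH)
    as [[a [Ha HW]] | [a [Ha HW]]].
  - intros a Ha; exact (complete _ (HE a Ha) (Hlen a Ha)).
  - intros a Ha HU; apply (Hrepl a Ha) in HU; exact (Hu _ (HE a Ha) _ (Hlen a Ha) HU).
  - intros a Ha HUH; apply (Hrepl a Ha) in HUH; exact (Huh _ (HE a Ha) _ (Hlen a Ha) HUH).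
  - exact Hdiamond.
  - left; exists a; split; [exact Ha |].
    apply Hw; [apply in_or_app; auto | exact HW].
  - right; exists a; split; [exact Ha |].
    intros Hx; apply HW, (Hw a); [apply in_or_app; auto | exact Hx].
Qed.

End DRuleTheory.

Theorem lemma8 (ar : nat -> nat) (T : ctheory) (HT : wf_ctheory ar T)
  (D : Type) (HD : inhabited D) (fI : nat -> list D -> D) (I : psym -> list D -> Prop) :
  causal_holds fI ar I T ->
  (forall F, In F (cc_formulas ar (expl T)) -> holds fI I F) ->
  SM fI ar (expl T) I (Pi T ++ cc_formulas ar (expl T)).
Proof.
  intros Hcausal Hcc.
  destruct HD as [d].
  assert (Hatoms : forall r a, In r (drules T) -> In a (dpos r ++ dneg r) ->
                     In (fst a) (expl T) /\ length (snd a) = ar (fst a))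
    by (intros r a Hr; apply (proj2 HT r Hr)).
  pose proof (holds_cc_formulas_iff d _ _ Hcc) as Hcomplete.
  split.
  - intros F HF; apply in_app_or in HF as [HF | HF]; auto.
    exact (holds_Pi Hatoms Hcomplete Hcausal F HF).
  - intros [u [uh [[Hu [Huh Hstrict]] HPi]]]; apply Hstrict.
    assert (Hw := Tdag_completion T fI I Hatoms Hcomplete Hu Huh
                    (fun F HF => HPi F (in_or_app _ _ _ (or_introl HF)))).
    apply Hcausal in Hw.
    split; intros q Hq l Hl HI.
    + destruct (proj2 (Hw q Hq l Hl) HI) as [HU | [HnI _]]; tauto.
    + apply NNPP; intros HnUH.
      apply (Hcomplete q l Hq Hl) in HI.
      apply HI, (Hw q Hq l Hl); auto.
Qed.
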